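(* For $\alpha\in\mathbb{R}\setminus\{0\}$ let $$P_{-2}=\frac{uz}{2},\quad P_{-1}=\frac{u-y-2\alpha(yu+uz-y)}{2\alpha},\quad P_0=\frac{u(\alpha x+4\alpha y+\alpha z-2)+2(\alpha-2\alpha y+y)}{2\alpha},$$ $$P_1=\frac{u-y-2\alpha(xu+yu-y)}{2\alpha},\quad P_2=\frac{xu}{2},$$ and let $\gamma_\alpha=\sup\{\delta\ge0:\ P_i(x,y,z,u)\ge0\ \text{for all } -2\le i\le2 \text{ and all }(x,y,z,u)\in[0,\delta]^4\}$. Then $\gamma_\alpha=\frac12$ for $\alpha\in[\frac12,1]$, and $\gamma_\alpha<\frac12$ for $0\ne\alpha<\frac12$ and for $\alpha>1$.
   Context: These are the positivity polynomials of the two-stage second-order explicit Runge--Kutta method with $a_{21}=\alpha$, $b=(1-\frac1{2\alpha},\frac1{2\alpha})$, applied to the semi-discretized heat equation $u_k'=q_k\,(u_{k-1}-2u_k+u_{k+1})/(\Delta x)^2$ with periodic indices and $q_k\ge0$: one step gives $u^{n+1}_k=\sum_{i=-2}^2P_iu^n_{k-i}$, where $x=\xi^1_{k-1}$, $y=\xi^1_k$, $z=\xi^1_{k+1}$, $u=\xi^2_k$ and $\xi^j_\ell=\Delta t\,q_\ell/(\Delta x)^2$ are treated as independent variables. *)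

From HB Require Import structures.
From mathcomp Require Import all_boot all_order all_algebra.
From mathcomp Require Import boolp classical_sets reals.
Set Implicit Arguments. Unset Strict Implicit. Unset Printing Implicit Defensive.
Import Order.TTheory GRing.Theory Num.Theory.
Local Open Scope ring_scope.
Local Open Scope classical_set_scope.

Section Defs.
Variable R : realType.

Definition Pm2 (a x y z u : R) : R := u * z / 2.
Definition Pm1 (a x y z u : R) : R :=
  (u - y - 2 * a * (y * u + u * z - y)) / (2 * a).
Definition P0 (a x y z u : R) : R :=
  (u * (a * x + 4 * a * y + a * z - 2) + 2 * (a - 2 * a * y + y)) / (2 * a).
Definition P1 (a x y z u : R) : R :=
  (u - y - 2 * a * (x * u + y * u - y)) / (2 * a).
Definition P2 (a x y z u : R) : R := x * u / 2.

Definition all_P_nonneg (a x y z u : R) : Prop :=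
  [/\ 0 <= Pm2 a x y z u, 0 <= Pm1 a x y z u, 0 <= P0 a x y z u,
      0 <= P1 a x y z u & 0 <= P2 a x y z u].

Definition good_deltas (a : R) : set R :=
  [set d | 0 <= d /\
     forall x y z u : R, 0 <= x <= d -> 0 <= y <= d -> 0 <= z <= d ->
       0 <= u <= d -> all_P_nonneg a x y z u].

Definition gamma (a : R) : R := sup (good_deltas a).
End Defs.

(** On the cube [[0,1/2]^4], for [1/2 <= α <= 1], the numerators of [P_{-1}], [P_0]
    and [P_1] split into sums of products of factors such as [1/2 - y], [1 - 2u],
    [2α - 1], [1 - α], all nonnegative there, so [1/2] is admissible.  Conversely,
    evaluating [P_{-1}] at corners of [[0,δ]^4] bounds every admissible [δ]:
    at [(0,δ,δ,δ)] it equals [δ(1 - 2δ)], so [δ <= 1/2] for every [α]; at [(0,0,δ,δ)]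
    it equals [δ(1 - 2αδ)/(2α)], so [δ <= 1/(2α)]; and for [α < 1/2] either
    [(0,0,0,δ)] (if [α < 0]) or [(0,δ,0,0)] (if [0 < α]) forces [δ = 0]. *)
From HB Require Import structures.
From mathcomp Require Import all_boot all_order all_algebra.
From mathcomp Require Import boolp classical_sets reals.
From mathcomp Require Import ring lra.
Set Implicit Arguments. Unset Strict Implicit. Unset Printing Implicit Defensive.
Import Order.TTheory GRing.Theory Num.Theory.
Local Open Scope ring_scope.

Section Supremum.
Variable R : realType.

Lemma sup_eq_max (E : set R) (x : R) : E x -> ubound E x -> sup E = x.
Proof.
move=> Ex ubx; apply/eqP; rewrite eq_le ge_sup ?andbT //; last by exists x.
by apply: sup_upper_bound => //; split; exists x.
Qed.

End Supremum.

Section PositivityPolynomials.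
Variable R : realType.
Implicit Types a d x y z u : R.

Lemma P1_Pm1 a x y z u : P1 a x y z u = Pm1 a z y x u.
Proof. by rewrite /P1 /Pm1; congr (_ / _); ring. Qed.

Lemma good_deltas0 a : good_deltas a 0.
Proof.
split=> // x y z u; rewrite -!eq_le => /eqP<- /eqP<- /eqP<- /eqP<-.
have [->|a0] := eqVneq a 0.
  by rewrite /all_P_nonneg /Pm2 /Pm1 /P0 /P1 /P2 !(mulr0, mul0r, invr0).
rewrite /all_P_nonneg; have -> : P0 a 0 0 0 0 = 1 by rewrite /P0; field.
by rewrite /Pm2 /Pm1 /P1 /P2 !(mulr0, mul0r, subr0, addr0) ler01.
Qed.

Lemma gamma_le a c : (forall d, good_deltas a d -> d <= c) -> gamma a <= c.
Proof. by move=> ub; apply: ge_sup => //; exists 0; apply: good_deltas0. Qed.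

Lemma good_deltas_Pm1 a d x y z u : good_deltas a d ->
  0 <= x <= d -> 0 <= y <= d -> 0 <= z <= d -> 0 <= u <= d ->
  0 <= Pm1 a x y z u.
Proof. by move=> [_ good] hx hy hz hu; have [] := good x y z u hx hy hz hu. Qed.

Section CornerBounds.
Variables a d : R.
Hypotheses (a_neq0 : a != 0) (good : good_deltas a d).

Let d_ge0 : 0 <= d. Proof. by case: good. Qed.
Let box0 : 0 <= (0 : R) <= d. Proof. by rewrite lexx d_ge0. Qed.
Let boxd : 0 <= d <= d. Proof. by rewrite lexx d_ge0. Qed.

Lemma good_deltas_le_half : d <= 2^-1.
Proof.
have := good_deltas_Pm1 good box0 boxd boxd boxd.
have -> : Pm1 a 0 d d d = d * (1 - 2 * d) by rewrite /Pm1; field.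
by nra.
Qed.

Lemma good_deltas_le_inv : 0 < a -> d <= (2 * a)^-1.
Proof.
move=> a_gt0; rewrite -[leRHS]mulr1 ler_pdivlMl; last lra.
have := good_deltas_Pm1 good box0 box0 boxd boxd.
have -> : Pm1 a 0 0 d d = d * (1 - 2 * a * d) / (2 * a) by rewrite /Pm1; field.
rewrite pmulr_lge0 ?invr_gt0; last lra.
by nra.
Qed.

Lemma good_deltas_le0 : a < 2^-1 -> d <= 0.
Proof.
move=> a_lt_half; have [a_lt0|a_ge0] := ltP a 0.
  have := good_deltas_Pm1 good box0 box0 box0 boxd.
  have -> : Pm1 a 0 0 0 d = - d / (- (2 * a)) by rewrite /Pm1; field.
  by rewrite pmulr_lge0 ?invr_gt0 ?oppr_ge0 //; lra.
have a_gt0 : 0 < a by rewrite lt_neqAle eq_sym a_neq0.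
have := good_deltas_Pm1 good box0 boxd box0 box0.
have -> : Pm1 a 0 d 0 0 = d * (2 * a - 1) / (2 * a) by rewrite /Pm1; field.
by rewrite pmulr_lge0 ?invr_gt0; nra.
Qed.

End CornerBounds.

Section HalfAdmissible.
Variable a : R.
Hypothesis a_range : 2^-1 <= a <= 1.

Lemma Pm1_ge0_half_cube x y z u :
  0 <= y <= 2^-1 -> 0 <= z <= 2^-1 -> 0 <= u <= 2^-1 -> 0 <= Pm1 a x y z u.
Proof.
case/andP: a_range => a_ge a_le /andP[y0 y1] /andP[z0 z1] /andP[u0 u1].
apply: divr_ge0; last lra.
have -> : u - y - 2 * a * (y * u + u * z - y) =
    2 * u * (a * (2^-1 - z) + (1 - a) * (2^-1 - y)) + y * (2 * a - 1) * (1 - 2 * u).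
  by field.
have u_term : 0 <= 2 * u * (a * (2^-1 - z) + (1 - a) * (2^-1 - y)).
  by apply: mulr_ge0; nra.
have y_term : 0 <= y * (2 * a - 1) * (1 - 2 * u).
  by apply: mulr_ge0; [apply: mulr_ge0|]; lra.
lra.
Qed.

Lemma P0_ge0_half_cube x y z u :
  0 <= x -> 0 <= y <= 2^-1 -> 0 <= z -> 0 <= u <= 2^-1 -> 0 <= P0 a x y z u.
Proof.
case/andP: a_range => a_ge a_le x0 /andP[y0 y1] z0 /andP[u0 u1].
apply: divr_ge0; last lra.
have -> : u * (a * x + 4 * a * y + a * z - 2) + 2 * (a - 2 * a * y + y) =
    (1 - 2 * u) * (2 * a * (1 - 2 * y) + 2 * y)
    + 2 * u * (a * (x + z) / 2 + (2 * a - 1) + 2 * y * (1 - a)).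
  by field.
have u_term : 0 <= 2 * u * (a * (x + z) / 2 + (2 * a - 1) + 2 * y * (1 - a)).
  by apply: mulr_ge0; nra.
have y_term : 0 <= (1 - 2 * u) * (2 * a * (1 - 2 * y) + 2 * y).
  by apply: mulr_ge0; nra.
lra.
Qed.

Lemma good_deltas_half : good_deltas a 2^-1.
Proof.
split=> [|x y z u hx hy hz hu]; first lra.
have [x0 _] := andP hx; have [z0 _] := andP hz; have [u0 _] := andP hu.
split; rewrite ?P1_Pm1.
- by rewrite /Pm2 divr_ge0 ?mulr_ge0.
- exact: Pm1_ge0_half_cube.
- exact: P0_ge0_half_cube.
- exact: Pm1_ge0_half_cube.
- by rewrite /P2 divr_ge0 ?mulr_ge0.
Qed.

End HalfAdmissible.

End PositivityPolynomials.

Theorem proposition9 (R : realType) :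
  (forall a : R, 2^-1 <= a <= 1 -> gamma a = 2^-1) /\
  (forall a : R, a != 0 -> (a < 2^-1 \/ 1 < a) -> gamma a < 2^-1).
Proof.
split=> [a a_range | a a_neq0 [a_lt_half | a_gt1]].
- have a_neq0 : a != 0 by case/andP: a_range; rewrite neq_lt; lra.
  apply: sup_eq_max; first exact: good_deltas_half.
  by move=> d; apply: (good_deltas_le_half a_neq0).
- apply: (le_lt_trans (gamma_le (c := 0) _)); last lra.
  by move=> d good; apply: (good_deltas_le0 a_neq0 good).
- apply: (le_lt_trans (gamma_le (c := (2 * a)^-1) _)).
    by move=> d good; apply: (good_deltas_le_inv a_neq0 good); lra.
  by rewrite ltf_pV2 ?posrE; lra.
Qed.
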